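(* Let $(M,g)$ be a Riemannian manifold of dimension $n$ with Riemann curvature tensor $R$, and let $p$ be an integer with $1\leq p\leq n/2$. Then $(M,g)$ is $p$-pure if and only if at each point $m\in M$ there exists a family $\{h_i:i\in I\}$ of symmetric bilinear forms on $T_mM$ which are simultaneously diagonalizable (by an orthonormal basis of $T_mM$) such that $R^p$ at $m$ belongs to $\mathrm{Span}\{h_{i_1}h_{i_2}\cdots h_{i_p}: i_1,\dots,i_p\in I\}$.
   Context: For a Euclidean vector space $(V,g)$, a double form of degree $(p,q)$ is an element of $\Lambda^pV^*\otimes\Lambda^qV^*$, identified with a multilinear form skew-symmetric in its first $p$ and in its last $q$ arguments; bilinear forms on $V$ are $(1,1)$ double forms. The exterior product of double forms is defined on decomposable elements by $(\theta_1\otimes\theta_2)(\theta_3\otimes\theta_4)=(\theta_1\wedge\theta_3)\otimes(\theta_2\wedge\theta_4)$ and extended bilinearly; $h_{i_1}\cdots h_{i_p}$ and $R^p$ denote products for this operation. The curvature tensor $R$ at $m$ is regarded as a $(2,2)$ double form on $T_mM$. $(M,g)$ is $p$-pure if at each point $m$ there is an orthonormal basis $(e_i)$ of $T_mM$, with dual basis $(e_i^* )$, such that $R^p\in\mathrm{Span}\{e_{i_1}^*\wedge\cdots\wedge e_{i_p}^*\otimes e_{i_1}^*\wedge\cdots\wedge e_{i_p}^*:1\leq i_1<\dots<i_p\leq n\}$. *)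

(* Double forms on the Euclidean space R^n (standard inner
   product), represented by their components on the standard basis. *)
From HB Require Import structures.
From mathcomp Require Import all_boot all_order all_algebra fingroup perm.
From mathcomp Require Import reals.
Unset Printing Implicit Defensive.
Import Order.TTheory GRing.Theory Num.Theory.
Local Open Scope ring_scope.

Section DoubleForms.
Variable R : realType.
Variable n : nat.

(* A (p,q) double form on R^n, given by its values D(e_{a 1},...,e_{a p};
   e_{b 1},...,e_{b q}) on standard basis vectors (multilinearity). *)
Definition dform (p q : nat) := ('I_p -> 'I_n) -> ('I_q -> 'I_n) -> R.

Definition is_dform {p q} (D : dform p q) : Prop :=
  (forall (s : 'S_p) a b, D (a \o s) b = (-1) ^+ s * D a b) /\
  (forall (s : 'S_q) a b, D a (b \o s) = (-1) ^+ s * D a b).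

(* exterior product of double forms (determinant / Alt convention):
   (w1 w2)(x;y) = 1/(p!r!q!s!) sum_{sigma,tau} sgn sigma sgn tau
                  w1(x_sigma(1..p); y_tau(1..q)) w2(x_sigma(p+1..); y_tau(q+1..)) *)
Definition dmul p q r s (w1 : dform p q) (w2 : dform r s) : dform (p + r) (q + s) :=
  fun a b =>
    ((p`! * r`! * q`! * s`!)%N%:R)^-1 *
    \sum_(sg : 'S_(p + r)) \sum_(tu : 'S_(q + s))
      ((-1) ^+ sg * (-1) ^+ tu *
       w1 (fun i => a (sg (lshift r i))) (fun j => b (tu (lshift s j))) *
       w2 (fun i => a (sg (rshift p i))) (fun j => b (tu (rshift q j)))).

Definition dunit : dform 0 0 := fun _ _ => 1.

Arguments dmul {p q r s}.

Fixpoint dpow (Rc : dform 2 2) (k : nat) : dform k.*2 k.*2 :=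
  match k return dform k.*2 k.*2 with
  | 0 => dunit
  | k'.+1 => dmul Rc (dpow Rc k')
  end.

Fixpoint dprod (k : nat) : ('I_k -> dform 1 1) -> dform k k :=
  match k return ('I_k -> dform 1 1) -> dform k k with
  | 0 => fun _ => dunit
  | k'.+1 => fun h => dmul (h ord0) (dprod k' (fun i => h (lift ord0 i)))
  end.

Definition bil (B : 'M[R]_n) : dform 1 1 := fun a b => B (a ord0) (b ord0).

Definition in_span {p q} (S : dform p q -> Prop) (D : dform p q) : Prop :=
  exists (k : nat) (c : 'I_k -> R) (v : 'I_k -> dform p q),
    (forall j, S (v j)) /\ (forall a b, D a b = \sum_(j < k) c j * v j a b).

(* an orthonormal basis (e_i) of R^n: rows of Q, with Q Q^T = 1 *)
Definition orthonormal_basis (Q : 'M[R]_n) : Prop := Q *m Q^T = 1%:M.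

(* e*_{i_1} /\ ... /\ e*_{i_p} (determinant convention), e*_i = <e_i, .> *)
Definition wedge_dual (Q : 'M[R]_n) {p} (i : 'I_p -> 'I_n) (a : 'I_p -> 'I_n) : R :=
  \det (\matrix_(k < p, l < p) Q (i k) (a l)).

Definition pure_basis_form (Q : 'M[R]_n) {p} (i : 'I_p -> 'I_n) : dform p p :=
  fun a b => wedge_dual Q i a * wedge_dual Q i b.

Definition strictly_increasing {p} (i : 'I_p -> 'I_n) : Prop :=
  forall k l : 'I_p, (k < l)%N -> (i k < i l)%N.

Definition pure_at (p : nat) (Rc : dform 2 2) : Prop :=
  exists (Q : 'M[R]_n), orthonormal_basis Q /\
    in_span (fun D => exists i : 'I_p.*2 -> 'I_n,
                        strictly_increasing i /\ D = pure_basis_form Q i)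
            (dpow Rc p).


Definition simult_orth_diag {I : Type} (h : I -> 'M[R]_n) : Prop :=
  exists (Q : 'M[R]_n), orthonormal_basis Q /\
    forall i, is_diag_mx (Q *m h i *m Q^T).

Definition pair2 (x y : 'I_n) : 'I_2 -> 'I_n := fun k => if k == ord0 then x else y.

Definition curvature_like (Rc : dform 2 2) : Prop :=
  is_dform Rc /\
  (forall a b, Rc a b = Rc b a) /\
  (forall x y z w, Rc (pair2 x y) (pair2 z w) + Rc (pair2 y z) (pair2 x w)
                   + Rc (pair2 z x) (pair2 y w) = 0).

End DoubleForms.

Arguments dmul {R n p q r s}.
Arguments dunit {R n}.
Arguments dpow {R n}.
Arguments dprod {R n}.
Arguments bil {R n}.
Arguments in_span {R n p q}.
Arguments orthonormal_basis {R n}.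
Arguments pure_at {R n}.
Arguments simult_orth_diag {R n I}.
Arguments curvature_like {R n}.
Arguments is_dform {R n p q}.

From mathcomp Require Import all_boot all_order all_algebra fingroup perm.
From mathcomp Require Import reals ring.
Import GRing.Theory Num.Theory.
Local Open Scope ring_scope.

(* Expanding the exterior product, a product h_1 ... h_k of bilinear forms
   takes the value sum_{s,t} sgn s sgn t prod_j h_j(x_(s j), y_(t j)).  For the
   rank-one forms e*_i (x) e*_i this factors into a product of two determinants,
   i.e. into the pure form e*_(i_1)/\.../\e*_(i_k) (x) e*_(i_1)/\.../\e*_(i_k).
   Conversely, forms diagonal in the basis (e_i) are combinations of these
   rank-one forms, so by multilinearity their products are combinations of pure
   forms; a pure form vanishes when an index repeats and otherwise equals the
   pure form of the sorted indices. *)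

Section Span.
Context {R : realType} {n p q : nat} {S : dform R n p q -> Prop}.

Lemma in_span_mem D : S D -> in_span S D.
Proof.
move=> SD; exists 1%N, (fun _ => 1), (fun _ => D); split => // a b.
by rewrite big_ord1 mul1r.
Qed.

Lemma in_span0 : in_span S (fun _ _ => 0).
Proof.
exists 0%N, (fun _ => 0), (fun _ _ _ => 0); split; first by case.
by move=> a b; rewrite big_ord0.
Qed.

Lemma in_span_eq {D D'} :
  in_span S D -> (forall a b, D' a b = D a b) -> in_span S D'.
Proof.
move=> [k [c [v [Sv E]]]] E'; exists k, c, v; split => // a b.
by rewrite E' E.
Qed.

Lemma in_span_lin x {D1 D2} :
  in_span S D1 -> in_span S D2 -> in_span S (fun a b => x * D1 a b + D2 a b).
Proof.
move=> [k1 [c1 [v1 [Sv1 E1]]]] [k2 [c2 [v2 [Sv2 E2]]]].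
exists (k1 + k2)%N,
  (fun i => match split i with inl j => x * c1 j | inr j => c2 j end),
  (fun i => match split i with inl j => v1 j | inr j => v2 j end).
split=> [i|a b]; first by case: (split i).
rewrite big_split_ord E1 E2 mulr_sumr; congr (_ + _).
  apply: eq_bigr => j _.
  by rewrite -[lshift _ j]/(unsplit (inl j)) unsplitK mulrA.
apply: eq_bigr => j _.
by rewrite -[rshift _ j]/(unsplit (inr j)) unsplitK.
Qed.

Lemma in_span_sum {I : finType} (c : I -> R) (F : I -> dform R n p q) :
  (forall i, in_span S (F i)) -> in_span S (fun a b => \sum_i c i * F i a b).
Proof.
move=> SF; elim: (index_enum I) => [|i r IH].
  by apply: (in_span_eq in_span0) => a b; rewrite big_nil.
by apply: (in_span_eq (in_span_lin (c i) (SF i) IH)) => a b; rewrite big_cons.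
Qed.

End Span.

Lemma in_span_trans {R : realType} {n p q : nat} (S T : dform R n p q -> Prop) D :
  (forall D', S D' -> in_span T D') -> in_span S D -> in_span T D.
Proof.
move=> ST [k [c [v [Sv E]]]].
exact: in_span_eq (in_span_sum c v (fun j => ST _ (Sv j))) E.
Qed.

Lemma exchange_big2 (V : nmodType) (A B C D : finType) (F : A -> B -> C -> D -> V) :
  \sum_a \sum_b \sum_c \sum_d F a b c d = \sum_c \sum_d \sum_a \sum_b F a b c d.
Proof.
under eq_bigr => a _ do rewrite exchange_big; rewrite exchange_big.
apply: eq_bigr => c _.
under eq_bigr => a _ do rewrite exchange_big; exact: exchange_big.
Qed.

Section ProductsOfBilinearForms.
Context {R : realType} {n : nat}.

Definition alt_term {k} (H : 'I_k -> 'M[R]_n) (a b : 'I_k -> 'I_n) (s t : 'S_k) : R :=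
  (-1) ^+ s * (-1) ^+ t * \prod_(j < k) H j (a (s j)) (b (t j)).

Lemma alt_term_lift k (H : 'I_k.+1 -> 'M[R]_n) a b (sg tu : 'S_k.+1) (s t : 'S_k) :
  alt_term H a b (lift_perm ord0 ord0 s * sg) (lift_perm ord0 ord0 t * tu) =
  (-1) ^+ sg * (-1) ^+ tu * H ord0 (a (sg ord0)) (b (tu ord0)) *
  alt_term (fun j => H (lift ord0 j))
           (fun j => a (sg (rshift 1 j))) (fun j => b (tu (rshift 1 j))) s t.
Proof.
have rshift1 (j : 'I_k) : rshift 1 j = lift ord0 j by apply: val_inj.
rewrite /alt_term big_ord_recl !permM !lift_perm_id.
under eq_bigr => j _ do rewrite !permM !lift_perm_lift.
under [in RHS]eq_bigr => j _ do rewrite !rshift1.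
have signM (u v : 'S_k.+1) : (-1) ^+ (u * v)%g = (-1) ^+ u * (-1) ^+ v :> R.
  by rewrite odd_permM signr_addb.
rewrite !signM !odd_lift_perm.
move: ((-1) ^+ sg : R) ((-1) ^+ tu : R) ((-1) ^+ s : R) ((-1) ^+ t : R) => x1 x2 x3 x4.
move: (H ord0 _ _) (\prod_(j < k) _) => y1 y2; ring.
Qed.

Lemma sum_alt_term_mulg k (H : 'I_k -> 'M[R]_n) a b (u v : 'S_k) :
  \sum_s \sum_t alt_term H a b (u * s) (v * t) = \sum_s \sum_t alt_term H a b s t.
Proof.
symmetry; rewrite (reindex_inj (mulgI u)); apply: eq_bigr => s _.
exact: (reindex_inj (mulgI v)).
Qed.

Lemma dprod_bil k (H : 'I_k -> 'M[R]_n) a b :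
  dprod k (fun j => bil (H j)) a b = \sum_(s : 'S_k) \sum_(t : 'S_k) alt_term H a b s t.
Proof.
elim: k H a b => [|k IH] H a b.
  have S0 (s : 'S_0) : s = 1%g by apply/permP => -[].
  have alt0 (s t : 'S_0) : alt_term H a b s t = 1.
    by rewrite (S0 s) (S0 t) /alt_term odd_perm1 big_ord0 !mulr1.
  under eq_bigr => s _ do rewrite (eq_bigr _ (fun t _ => alt0 s t)) sumr_const card_Sn.
  by rewrite sumr_const card_Sn.
rewrite /= /dmul.
have lshift0 (i : 'I_1) : lshift k i = ord0 by apply: val_inj; case: i => -[].
under eq_bigr => sg _ do under eq_bigr => tu _ do
  (rewrite IH /bil !lshift0 mulr_sumr; under eq_bigr => s _ do rewrite mulr_sumr).
under eq_bigr => sg _ do under eq_bigr => tu _ do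
  under eq_bigr => s _ do under eq_bigr => t _ do rewrite -alt_term_lift.
rewrite exchange_big2.
under eq_bigr => s _ do under eq_bigr => t _ do rewrite sum_alt_term_mulg.
have fact1 : 1`! = 1%N by [].
rewrite !sumr_const card_Sn -mulrnA mulrC -(mulr_natr (\sum_s _)) -mulrA.
by rewrite fact1 !muln1 mul1n mulfV ?mulr1 // pnatr_eq0 -lt0n muln_gt0 fact_gt0.
Qed.

Definition rank_one (Q : 'M[R]_n) (l : 'I_n) : 'M[R]_n := (row l Q)^T *m row l Q.

Lemma rank_oneE Q l x y : rank_one Q l x y = Q l x * Q l y.
Proof. by rewrite !mxE big_ord1 !mxE. Qed.

Lemma rank_one_sym Q l : (rank_one Q l)^T = rank_one Q l.
Proof. by rewrite trmx_mul trmxK. Qed.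

Lemma rank_one_orth_diag Q l :
  orthonormal_basis Q -> is_diag_mx (Q *m rank_one Q l *m Q^T).
Proof.
move=> oQ; have -> : Q *m rank_one Q l *m Q^T = delta_mx l l.
  have -> : Q *m rank_one Q l *m Q^T = (row l Q *m Q^T)^T *m (row l Q *m Q^T).
    by rewrite trmx_mul trmxK !mulmxA.
  by rewrite -row_mul oQ row1 trmx_delta mul_delta_mx.
apply/is_diag_mxP => i j ij; rewrite mxE.
by case: eqP => [il|]; case: eqP => [jl|] //=; rewrite il jl eqxx in ij.
Qed.

Lemma mulmx_diag_rank_one Q (d : 'rV[R]_n) :
  Q^T *m diag_mx d *m Q = \sum_l d 0 l *: rank_one Q l.
Proof.
apply/matrixP => x y; rewrite summxE mxE; apply: eq_bigr => l _.
by rewrite [RHS]mxE rank_oneE mul_mx_diag !mxE mulrCA mulrA.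
Qed.

Lemma wedge_dualE Q k (g : 'I_k -> 'I_n) a :
  wedge_dual R n Q g a = \sum_(s : 'S_k) (-1) ^+ s * \prod_(j < k) Q (g j) (a (s j)).
Proof. by apply: eq_bigr => s _; congr (_ * _); apply: eq_bigr => j _; rewrite mxE. Qed.

Lemma dprod_rank_one Q k (g : 'I_k -> 'I_n) a b :
  dprod k (fun j => bil (rank_one Q (g j))) a b = pure_basis_form R n Q g a b.
Proof.
rewrite dprod_bil /pure_basis_form !wedge_dualE mulr_suml.
apply: eq_bigr => s _; rewrite mulr_sumr; apply: eq_bigr => t _.
rewrite /alt_term; under eq_bigr => j _ do rewrite rank_oneE.
by rewrite big_split mulrACA.
Qed.

Lemma alt_term_sum {k} {H : 'I_k -> 'M[R]_n} {c : 'I_k -> 'I_n -> R}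
    {M : 'I_n -> 'M[R]_n} :
  (forall j, H j = \sum_l c j l *: M l) -> forall a b s t,
  alt_term H a b s t =
  \sum_(g : {ffun 'I_k -> 'I_n}) (\prod_j c j (g j)) * alt_term (fun j => M (g j)) a b s t.
Proof.
move=> HE a b s t; rewrite /alt_term.
under eq_bigr => j _ do (rewrite HE summxE; under eq_bigr => l _ do rewrite mxE).
rewrite bigA_distr_bigA mulr_sumr; apply: eq_bigr => g _.
by rewrite big_split mulrCA.
Qed.

Lemma dprod_diag Q {k} {H : 'I_k -> 'M[R]_n} {d : 'I_k -> 'rV[R]_n} :
  (forall j, H j = Q^T *m diag_mx (d j) *m Q) -> forall a b,
  dprod k (fun j => bil (H j)) a b =
  \sum_(g : {ffun 'I_k -> 'I_n}) (\prod_j d j 0 (g j)) * pure_basis_form R n Q g a b.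
Proof.
move=> HE a b; have HE' j : H j = \sum_l d j 0 l *: rank_one Q l.
  by rewrite HE mulmx_diag_rank_one.
rewrite dprod_bil.
under eq_bigr => s _ do under eq_bigr => t _ do rewrite (alt_term_sum HE').
under eq_bigr => s _ do rewrite exchange_big; rewrite exchange_big.
apply: eq_bigr => g _; rewrite -dprod_rank_one dprod_bil mulr_sumr.
by apply: eq_bigr => s _; rewrite mulr_sumr.
Qed.

End ProductsOfBilinearForms.

Lemma sort_injective n k (g : 'I_k -> 'I_n) : injective g ->
  exists (g' : 'I_k -> 'I_n) (pi : 'S_k),
    strictly_increasing n g' /\ forall j, g j = g' (pi j).
Proof.
move=> g_inj; set S := [set g j | j in [set: 'I_k]].
have cardS : #|S| = k by rewrite card_imset // cardsT card_ord.
pose g' j := enum_val (cast_ord (esym cardS) j).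
have gS j : g j \in S by apply: imset_f; rewrite in_setT.
pose pi0 j := cast_ord cardS (enum_rank_in (gS j) (g j)).
have gE j : g j = g' (pi0 j) by rewrite /g' /pi0 cast_ordK enum_rankK_in.
have pi0_inj : injective pi0 by move=> j1 j2 E; apply: g_inj; rewrite !gE E.
exists g', (perm pi0_inj); split=> [j1 j2 lt12|j]; last by rewrite permE.
have sortedS : sorted (fun x y : 'I_n => (x < y)%N) (enum S).
  have -> : enum S = [seq x <- enum 'I_n | x \in S] by rewrite enumT.
  apply: sorted_filter; first exact: ltn_trans.
  by rewrite -(sorted_map (e' := ltn) (f := val)) val_enum_ord iota_ltn_sorted.
have lt_size (j : 'I_k) : (cast_ord (esym cardS) j : nat) \in [pred m | (m < size (enum S))%N].
  by rewrite inE /= -cardE cardS ltn_ord.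
rewrite /g' !(enum_val_nth (g j1)).
exact: (sorted_ltn_nth (leT := fun x y : 'I_n => (x < y)%N)
  (fun y x z => @ltn_trans y x z) _ sortedS _ _ (lt_size j1) (lt_size j2) lt12).
Qed.

Section PureForms.
Context {R : realType} {n : nat}.

Definition sorted_pure_forms (Q : 'M[R]_n) k : dform R n k k -> Prop :=
  fun D => exists i : 'I_k -> 'I_n, strictly_increasing n i /\ D = pure_basis_form R n Q i.

Lemma wedge_dual_perm Q {k} {g g' : 'I_k -> 'I_n} {s : 'S_k} :
  (forall j, g j = g' (s j)) ->
  forall a, wedge_dual R n Q g a = (-1) ^+ s * wedge_dual R n Q g' a.
Proof.
move=> gE a; rewrite /wedge_dual -det_perm -det_mulmx -row_permE; congr (\det _).
by apply/matrixP => i j; rewrite !mxE gE.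
Qed.

Lemma pure_basis_form_span Q k (g : 'I_k -> 'I_n) :
  in_span (sorted_pure_forms Q k) (pure_basis_form R n Q g).
Proof.
case/boolP: (injectiveb g) => [/injectiveP/sort_injective [g' [pi [g'_incr gE]]]|].
  have g'_span : in_span (sorted_pure_forms Q k) (pure_basis_form R n Q g').
    by apply: in_span_mem; exists g'.
  apply: (in_span_eq g'_span) => a b; rewrite /pure_basis_form !(wedge_dual_perm Q gE).
  by rewrite mulrACA -signr_addb addbb mul1r.
case/injectivePn => j1 [j2 j12 gE].
apply: (in_span_eq in_span0) => a b.
rewrite /pure_basis_form /wedge_dual (determinant_alternate j12) ?mul0r // => l.
by rewrite !mxE gE.
Qed.

Lemma sorted_pure_span_rank_one Q k D :
  in_span (sorted_pure_forms Q k) D ->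
  in_span (fun D => exists f : 'I_k -> 'I_n, D = dprod k (fun j => bil (rank_one Q (f j)))) D.
Proof.
apply: in_span_trans => _ [i [_ ->]].
apply: (in_span_eq (in_span_mem (dprod k (fun j => bil (rank_one Q (i j)))) _)).
  by exists i.
by move=> a b; rewrite dprod_rank_one.
Qed.

Lemma orth_diag_decomposition Q (H : 'M[R]_n) :
  orthonormal_basis Q -> is_diag_mx (Q *m H *m Q^T) ->
  exists d : 'rV[R]_n, H = Q^T *m diag_mx d *m Q.
Proof.
move=> oQ /diag_mxP [d dE]; exists d; rewrite -dE.
have QtQ : Q^T *m Q = 1%:M by apply: mulmx1C.
by rewrite !mulmxA QtQ mul1mx -mulmxA QtQ mulmx1.
Qed.

Lemma diag_products_span_sorted_pure (I : Type) (h : I -> 'M[R]_n) Q k D :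
  orthonormal_basis Q -> (forall i, is_diag_mx (Q *m h i *m Q^T)) ->
  in_span (fun D => exists f : 'I_k -> I, D = dprod k (fun j => bil (h (f j)))) D ->
  in_span (sorted_pure_forms Q k) D.
Proof.
move=> oQ h_diag; apply: in_span_trans => _ [f ->].
have /all_sig [d dE] : forall j, {d : 'rV[R]_n | h (f j) = Q^T *m diag_mx d *m Q}.
  by move=> j; apply: sig_eqW; exact: orth_diag_decomposition.
pose c (g : {ffun 'I_k -> 'I_n}) := \prod_j d j 0 (g j).
apply: (in_span_eq (in_span_sum c _ (fun g => pure_basis_form_span Q _ g))).
by move=> a b; rewrite (dprod_diag Q dE).
Qed.

End PureForms.

Theorem mainTheorem2 (R : realType) (n p : nat) (M : Type)
    (Rc : M -> dform R n 2 2) :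
  (forall m, curvature_like (Rc m)) ->
  (1 <= p)%N -> (p.*2 <= n)%N ->
  ((forall m, pure_at p (Rc m)) <->
   (forall m, exists (I : Type) (h : I -> 'M[R]_n),
      (forall i, (h i)^T = h i) /\ simult_orth_diag h /\
      in_span (fun D => exists f : 'I_p.*2 -> I,
                          D = dprod (p.*2) (fun j => bil (h (f j))))
              (dpow (Rc m) p))).
Proof.
move=> _ _ _; split=> [pure m | diag m].
  have [Q [oQ R_span]] := pure m.
  exists 'I_n, (rank_one Q); split; first exact: rank_one_sym.
  split; last exact: sorted_pure_span_rank_one.
  by exists Q; split=> // l; apply: rank_one_orth_diag.
have [I [h [_ [[Q [oQ h_diag]] R_span]]]] := diag m.
by exists Q; split=> //; apply: diag_products_span_sorted_pure R_span.
Qed.
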